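(* Every connected door space $X$ satisfies OCC; that is, there do not exist pairwise disjoint nonempty subsets $A,B,C,D$ of $X$ such that $A$ and $B$ are open and $C$ and $D$ are closed.
   Context: A topological space $(X,\mathcal{T})$ is a connected door space if every proper nonempty subset of $X$ (i.e. every $A$ with $\varnothing\ne A\subsetneq X$) is either open or closed, but not both. A space satisfies OCC (the open-closed condition) if there are no pairwise disjoint nonempty subsets $A,B,C,D$ with $A,B$ open and $C,D$ closed. *)

From Stdlib Require Import Classical.

Set Implicit Arguments.

Record topology (X : Type) : Type := {
  is_open : (X -> Prop) -> Prop;
  open_empty : is_open (fun _ => False);
  open_full : is_open (fun _ => True);
  open_inter : forall U V, is_open U -> is_open V ->
                 is_open (fun x => U x /\ V x);
  open_union : forall (F : (X -> Prop) -> Prop),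
                 (forall U, F U -> is_open U) ->
                 is_open (fun x => exists U, F U /\ U x)
}.

Definition is_closed (X : Type) (T : topology X) (A : X -> Prop) : Prop :=
  is_open T (fun x => ~ A x).

Definition nonempty (X : Type) (A : X -> Prop) : Prop := exists x, A x.

Definition proper_subset (X : Type) (A : X -> Prop) : Prop := exists x, ~ A x.

Definition disjoint (X : Type) (A B : X -> Prop) : Prop :=
  forall x, A x -> B x -> False.

Definition connected_door_space (X : Type) (T : topology X) : Prop :=
  forall A : X -> Prop, nonempty A -> proper_subset A ->
    (is_open T A \/ is_closed T A) /\ ~ (is_open T A /\ is_closed T A).

Definition OCC (X : Type) (T : topology X) : Prop :=
  ~ exists A B C D : X -> Prop,
      nonempty A /\ nonempty B /\ nonempty C /\ nonempty D /\
      disjoint A B /\ disjoint A C /\ disjoint A D /\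
      disjoint B C /\ disjoint B D /\ disjoint C D /\
      is_open T A /\ is_open T B /\ is_closed T C /\ is_closed T D.

(* In a connected door space a nonempty set that is both open and closed is the
   whole space.  Given disjoint nonempty A, B open and C, D closed, each of the
   unions A∪C, A∪D, B∪C, B∪D is proper and nonempty, hence open or closed.  Two
   of them sharing C (or D) cannot both be open, since their intersection C
   would be clopen; two sharing A (or B) cannot both be closed.  This leaves,
   up to swapping C and D, the pattern A∪C, B∪D open and A∪D, B∪C closed.  Then
   A∪B∪C∪D is clopen, hence everything, so B∪D is the complement of the open
   set A∪C: a proper nonempty clopen set, which is absurd. *)
From Stdlib Require Import Classical FunctionalExtensionality PropExtensionality.

Set Implicit Arguments.

Definition union (X : Type) (P Q : X -> Prop) : X -> Prop := fun x => P x \/ Q x.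
Definition inter (X : Type) (P Q : X -> Prop) : X -> Prop := fun x => P x /\ Q x.

Lemma disjoint_sym (X : Type) (P Q : X -> Prop) : disjoint P Q -> disjoint Q P.
Proof. intros dPQ x Qx Px; exact (dPQ x Px Qx). Qed.

Section Topology.

Variables (X : Type) (T : topology X).

Lemma open_ext (P Q : X -> Prop) :
  (forall x, P x <-> Q x) -> is_open T P -> is_open T Q.
Proof.
  intros PQ oP.
  replace Q with P; [exact oP |].
  apply functional_extensionality; intro x.
  apply propositional_extensionality, PQ.
Qed.

Lemma closed_ext (P Q : X -> Prop) :
  (forall x, P x <-> Q x) -> is_closed T P -> is_closed T Q.
Proof.
  intros PQ; apply open_ext; intro x; rewrite (PQ x); tauto.
Qed.

Lemma union_open (P Q : X -> Prop) :
  is_open T P -> is_open T Q -> is_open T (union P Q).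
Proof.
  intros oP oQ.
  apply open_ext with (fun x => exists U, (U = P \/ U = Q) /\ U x).
  - intro x; unfold union; split.
    + intros [U [[-> | ->] Ux]]; [left | right]; exact Ux.
    + intros [Px | Qx]; eauto.
  - apply open_union; intros U [-> | ->]; assumption.
Qed.

Lemma union_closed (P Q : X -> Prop) :
  is_closed T P -> is_closed T Q -> is_closed T (union P Q).
Proof.
  intros cP cQ.
  apply open_ext with (inter (fun x => ~ P x) (fun x => ~ Q x)).
  - intro x; unfold inter, union; tauto.
  - apply open_inter; assumption.
Qed.

Lemma inter_closed (P Q : X -> Prop) :
  is_closed T P -> is_closed T Q -> is_closed T (inter P Q).
Proof.
  intros cP cQ.
  apply open_ext with (union (fun x => ~ P x) (fun x => ~ Q x)).
  - intro x; unfold inter, union; split; [tauto | apply not_and_or].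
  - apply union_open; assumption.
Qed.

Hypothesis door : connected_door_space T.

Lemma door_clopen_full (P : X -> Prop) :
  nonempty P -> is_open T P -> is_closed T P -> forall x, P x.
Proof.
  intros nP oP cP x.
  apply NNPP; intro Px.
  exact (proj2 (door nP (ex_intro _ x Px)) (conj oP cP)).
Qed.

Lemma door_union_open_or_closed (P Q R : X -> Prop) :
  nonempty P -> nonempty R -> disjoint P R -> disjoint Q R ->
  is_open T (union P Q) \/ is_closed T (union P Q).
Proof.
  intros [p Pp] [r Rr] dPR dQR.
  refine (proj1 (door (A := union P Q) _ _)).
  - exists p; left; exact Pp.
  - exists r; intros [Pr | Qr]; [exact (dPR r Pr Rr) | exact (dQR r Qr Rr)].
Qed.

Lemma door_unions_not_both_open (P Q R : X -> Prop) :
  nonempty P -> nonempty R -> is_closed T R -> disjoint P Q -> disjoint P R ->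
  ~ (is_open T (union P R) /\ is_open T (union Q R)).
Proof.
  intros [p Pp] nR cR dPQ dPR [oPR oQR].
  assert (oR : is_open T R).
  { apply open_ext with (inter (union P R) (union Q R)).
    - intro x; unfold inter, union; split; [| tauto].
      intros [[Px | Rx] [Qx | Rx']]; auto.
      destruct (dPQ x Px Qx).
    - apply open_inter; assumption. }
  exact (dPR p Pp (door_clopen_full nR oR cR p)).
Qed.

Lemma door_unions_not_both_closed (P Q R : X -> Prop) :
  nonempty P -> nonempty Q -> is_open T P -> disjoint P Q -> disjoint Q R ->
  ~ (is_closed T (union P Q) /\ is_closed T (union P R)).
Proof.
  intros nP [q Qq] oP dPQ dQR [cPQ cPR].
  assert (cP : is_closed T P).
  { apply closed_ext with (inter (union P Q) (union P R)).
    - intro x; unfold inter, union; split; [| tauto].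
      intros [[Px | Qx] [Px' | Rx]]; auto.
      destruct (dQR x Qx Rx).
    - apply inter_closed; assumption. }
  exact (dPQ q (door_clopen_full nP oP cP q) Qq).
Qed.

Lemma door_crossed_unions_absurd (A B C D : X -> Prop) :
  nonempty A -> nonempty B ->
  disjoint A B -> disjoint A D -> disjoint B C -> disjoint C D ->
  is_open T (union A C) -> is_open T (union B D) ->
  is_closed T (union A D) -> is_closed T (union B C) -> False.
Proof.
  intros [a Aa] [b Bb] dAB dAD dBC dCD oAC oBD cAD cBC.
  assert (full : forall x, union (union A C) (union B D) x).
  { apply door_clopen_full.
    - exists a; left; left; exact Aa.
    - apply union_open; assumption.
    - apply closed_ext with (union (union A D) (union B C)).
      + intro x; unfold union; tauto.
      + apply union_closed; assumption. }
  assert (cBD : is_closed T (union B D)).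
  { apply open_ext with (union A C); [| exact oAC].
    intro x; unfold union; split.
    - intros [Ax | Cx] [Bx | Dx];
        [exact (dAB x Ax Bx) | exact (dAD x Ax Dx)
        | exact (dBC x Bx Cx) | exact (dCD x Cx Dx)].
    - intro notBD; destruct (full x) as [ACx | BDx]; [exact ACx | contradiction]. }
  assert (nBD : nonempty (union B D)) by (exists b; left; exact Bb).
  destruct (door_clopen_full nBD oBD cBD a) as [Ba | Da];
    [exact (dAB a Aa Ba) | exact (dAD a Aa Da)].
Qed.

Section FourDisjointSets.

Variables A B C D : X -> Prop.
Hypotheses (nA : nonempty A) (nB : nonempty B) (nC : nonempty C) (nD : nonempty D).
Hypotheses (dAB : disjoint A B) (dAC : disjoint A C) (dAD : disjoint A D)
  (dBC : disjoint B C) (dBD : disjoint B D) (dCD : disjoint C D).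
Hypotheses (oA : is_open T A) (oB : is_open T B)
  (cC : is_closed T C) (cD : is_closed T D).

Lemma door_crossed_unions :
  (is_open T (union A C) /\ is_open T (union B D) /\
   is_closed T (union A D) /\ is_closed T (union B C)) \/
  (is_open T (union A D) /\ is_open T (union B C) /\
   is_closed T (union A C) /\ is_closed T (union B D)).
Proof.
  assert (AC := door_union_open_or_closed nA nB dAB (disjoint_sym dBC)).
  assert (AD := door_union_open_or_closed nA nB dAB (disjoint_sym dBD)).
  assert (BC := door_union_open_or_closed nB nA (disjoint_sym dAB) (disjoint_sym dAC)).
  assert (BD := door_union_open_or_closed nB nA (disjoint_sym dAB) (disjoint_sym dAD)).
  assert (notC := door_unions_not_both_open nA nC cC dAB dAC).
  assert (notD := door_unions_not_both_open nA nD cD dAB dAD).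
  assert (notA := door_unions_not_both_closed nA nC oA dAC dCD).
  assert (notB := door_unions_not_both_closed nB nC oB dBC dCD).
  tauto.
Qed.

End FourDisjointSets.

End Topology.

Theorem lemma2 (X : Type) (T : topology X) :
  connected_door_space T -> OCC T.
Proof.
  intros door (A & B & C & D & nA & nB & nC & nD & dAB & dAC & dAD & dBC & dBD & dCD
    & oA & oB & cC & cD).
  destruct (door_crossed_unions door nA nB nC nD dAB dAC dAD dBC dBD dCD oA oB cC cD)
    as [(oAC & oBD & cAD & cBC) | (oAD & oBC & cAC & cBD)].
  - exact (door_crossed_unions_absurd door nA nB dAB dAD dBC dCD oAC oBD cAD cBC).
  - exact (door_crossed_unions_absurd door nA nB dAB dAC dBD (disjoint_sym dCD)
      oAD oBC cAC cBD).
Qed.
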